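(* Let $H=P_r$ be the path $1-2-\cdots-r$ and, for each $i\in\{1,\dots,r\}$, let $G_i$ be a $d_i$-regular graph of order $n_i$ with adjacency eigenvalues $d_i=\lambda_1(A(G_i)),\dots,\lambda_{n_i}(A(G_i))$. Let $G=\bigvee_{P_r}\{G_i:1\le i\le r\}$, $N_i=\sum_{j\in N_{P_r}(i)}n_j$, $\sigma(M_i(s))=\{s^2(d_i+N_i-1)-s\lambda_k(A(G_i))+1\}_{k=1}^{n_i}$ and $\lambda_1(M_i(s))=s^2(d_i+N_i-1)-sd_i+1$. Then $$\sigma(M_G(s))=\bigcup_{i=1}^r\big(\sigma(M_i(s))-\{\lambda_1(M_i(s))\}\big)\cup\sigma(F_r(s)),$$ where $F_r(s)$ is the $r\times r$ symmetric tridiagonal matrix with diagonal entries $\lambda_1(M_1(s)),\dots,\lambda_1(M_r(s))$ and sub/super-diagonal entries $(F_r(s))_{i,i+1}=(F_r(s))_{i+1,i}=-s\sqrt{n_in_{i+1}}$, $i=1,\dots,r-1$ (and removing $\{\lambda_1(M_i(s))\}$ means removing one copy, corresponding to $k=1$).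
   Context: For a simple undirected graph $G$ with adjacency matrix $A$, degree matrix $D$ and identity $I$, and real $s$, the deformed Laplacian matrix is $M_G(s)=I-sA+s^2(D-I)$; $\sigma(\cdot)$ is the multiset of eigenvalues. $H$-join: given a graph $H$ on vertex set $\{1,\dots,r\}$ and pairwise vertex-disjoint graphs $G_1,\dots,G_r$, $\bigvee_H\{G_i\}$ has vertex set $\bigcup_iV(G_i)$ and edges $\bigcup_iE(G_i)$ together with all edges $uv$, $u\in V(G_i)$, $v\in V(G_j)$, for each $ij\in E(H)$. *)

From HB Require Import structures.
From mathcomp Require Import all_boot all_order all_algebra.
Set Implicit Arguments. Unset Strict Implicit. Unset Printing Implicit Defensive.
Import Order.TTheory GRing.Theory Num.Theory.
Local Open Scope ring_scope.

Definition simple_graph (T : finType) (e : rel T) : Prop :=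
  (forall x, ~~ e x x) /\ (forall x y, e x y = e y x).

Definition degree (T : finType) (e : rel T) (x : T) : nat := #|[set y | e x y]|.

Definition regular (T : finType) (e : rel T) (d : nat) : Prop :=
  forall x, degree e x = d.

Definition adjmx (R : nzRingType) (T : finType) (e : rel T) : 'M[R]_#|T| :=
  \matrix_(x, y) (e (enum_val x) (enum_val y))%:R.

Definition degmx (R : nzRingType) (T : finType) (e : rel T) : 'M[R]_#|T| :=
  \matrix_(x, y) ((x == y)%:R * (degree e (enum_val x))%:R).

Definition deformed_laplacian (R : comNzRingType) (T : finType) (e : rel T) (s : R)
  : 'M[R]_#|T| :=
  1%:M - s *: adjmx R e + s ^+ 2 *: (degmx R e - 1%:M).

Definition is_spectrum (R : comNzRingType) n (A : 'M[R]_n) (l : seq R) : Prop :=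
  char_poly A = \prod_(x <- l) ('X - x%:P).

Definition path_adj (r : nat) : rel 'I_r :=
  fun i j => (i.+1 == j :> nat) || (j.+1 == i :> nat).

Definition path_join (r : nat) (n : 'I_r -> nat) (e : forall i, rel 'I_(n i))
  : rel {i : 'I_r & 'I_(n i)} :=
  fun u v =>
    if tag u == tag v then
      (e (tag u) (tagged u) (tagged_as u v))
    else path_adj (tag u) (tag v).

Definition Nsum (r : nat) (n : 'I_r -> nat) (i : 'I_r) : nat :=
  \sum_(j < r | path_adj i j) n j.

Definition Mi_eig (R : rcfType) (r : nat) (n : 'I_r -> nat) (d : 'I_r -> nat)
  (s : R) (i : 'I_r) (lam : R) : R :=
  s ^+ 2 * ((d i)%:R + (Nsum n i)%:R - 1) - s * lam + 1.

Definition Fmx (R : rcfType) (r : nat) (n : 'I_r -> nat) (d : 'I_r -> nat) (s : R)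
  : 'M[R]_r :=
  \matrix_(i, j)
    if i == j then Mi_eig n d s i (d i)%:R
    else if path_adj i j then - s * Num.sqrt ((n i * n j)%:R)
    else 0.

From HB Require Import structures.
From mathcomp Require Import all_boot all_order all_algebra.
From mathcomp Require Import perm ring.
Import Order.TTheory GRing.Theory Num.Theory.
Local Open Scope ring_scope.

(* Call a partition of the indices of a square matrix K equitable when the sum
   of a row of K over a block depends only on the block of the row (this gives
   a quotient matrix B), and when, outside its own block, a row depends only on
   its block.  Choose a representative in each block and conjugate K by the
   unipotent matrix 1 + E whose representative columns are the block indicator
   vectors: the result is block triangular, with B as one diagonal block and,
   for each block, the restriction of K to the non-representatives minus the
   representative row.  So char_poly K = char_poly B * prod_i (reduced blocks).

   The deformed Laplacian of a P_r-join of regular graphs is equitable for the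
   partition into the G_i.  Its quotient matrix is similar to F_r(s) through
   diag (sqrt n_i), and its i-th reduced block is (s^2(d_i+N_i-1)+1) I - s C_i,
   where C_i is A(G_i) reduced at one vertex.  The one-block case of the same
   argument gives char_poly A(G_i) = (X - d_i) char_poly C_i, which identifies
   the spectrum of C_i with that of A(G_i) minus the eigenvalue d_i. *)

Set Implicit Arguments. Unset Strict Implicit. Unset Printing Implicit Defensive.

Section BlockDeterminant.
Variable R : comNzRingType.

Lemma det_mxsub_perm N (A : 'M[R]_N) (h : 'I_N -> 'I_N) :
  injective h -> \det (mxsub h h A) = \det A.
Proof.
move=> h_inj; set s := perm h_inj.
have -> : mxsub h h A = perm_mx s *m A *m perm_mx s^-1.
  by rewrite -row_permE -col_permE; apply/matrixP => i j; rewrite !mxE !permE.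
by rewrite !det_mulmx !det_perm odd_permV mulrC mulrA -signr_addb addbb mul1r.
Qed.

Lemma det_mxsub_codom m1 m2 N (A : 'M[R]_N) (f : 'I_m1 -> 'I_N) (g : 'I_m2 -> 'I_N) :
  injective f -> injective g -> codom f =i codom g ->
  \det (mxsub f f A) = \det (mxsub g g A).
Proof.
move=> f_inj g_inj fg.
have m21 : m2 = m1.
  rewrite -[m1]card_ord -[m2]card_ord -(card_codom f_inj) -(card_codom g_inj).
  exact: eq_card.
subst m2.
have gf k : g k \in codom f by rewrite fg codom_f.
pose s k := iinv (gf k).
have gE : g =1 f \o s by move=> k; rewrite /= f_iinv.
have s_inj : injective s by move=> a b /(congr1 f); rewrite !f_iinv; apply: g_inj.
by rewrite (eq_mxsub _ _ gE gE) mxsub_comp det_mxsub_perm.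
Qed.

Lemma det_mxsub_onto m N (A : 'M[R]_N) (h : 'I_m -> 'I_N) :
  injective h -> (forall x, x \in codom h) -> \det (mxsub h h A) = \det A.
Proof.
move=> h_inj h_onto; rewrite (@det_mxsub_codom _ _ _ _ h id) //.
  by congr (\det _); apply/matrixP => i j; rewrite mxE.
by move=> x; rewrite h_onto codom_f.
Qed.

Lemma codom_enum_val (T : finType) (B : {pred T}) x :
  (x \in codom (@enum_val T B)) = (x \in B).
Proof.
apply/codomP/idP => [[y ->]|xB]; first exact: enum_valP.
by exists (enum_rank_in xB x); rewrite enum_rankK_in.
Qed.

Lemma det_ublock_pred N (A : 'M[R]_N) (P : pred 'I_N) m1 m2
    (g1 : 'I_m1 -> 'I_N) (g2 : 'I_m2 -> 'I_N) :
  injective g1 -> injective g2 ->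
  (forall x, (x \in codom g1) = P x) -> (forall x, (x \in codom g2) = ~~ P x) ->
  (forall x y, ~~ P x -> P y -> A x y = 0) ->
  \det A = \det (mxsub g1 g1 A) * \det (mxsub g2 g2 A).
Proof.
move=> g1_inj g2_inj g1P g2P A0.
pose h (k : 'I_(m1 + m2)) := match split k with inl a => g1 a | inr b => g2 b end.
have hl a : h (lshift m2 a) = g1 a by rewrite /h (unsplitK (inl a)).
have hr b : h (rshift m1 b) = g2 b by rewrite /h (unsplitK (inr b)).
have P1 a : P (g1 a) by rewrite -g1P codom_f.
have P2 b : ~~ P (g2 b) by rewrite -g2P codom_f.
have h_inj : injective h.
  move=> a b; rewrite -[a]splitK -[b]splitK.
  case: (split a) => a'; case: (split b) => b' /=; rewrite ?hl ?hr.
  - by move/g1_inj ->.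
  - by move=> ab; move: (P1 a'); rewrite ab (negbTE (P2 b')).
  - by move=> ab; move: (P1 b'); rewrite -ab (negbTE (P2 a')).
  - by move/g2_inj ->.
have h_onto x : x \in codom h.
  have [|] := boolP (P x); [rewrite -g1P | rewrite -g2P] => /codomP [y ->].
    by rewrite -hl codom_f.
  by rewrite -hr codom_f.
rewrite -(det_mxsub_onto A h_inj h_onto) -[mxsub h h A]submxK.
have -> : dlsubmx (mxsub h h A) = 0 by apply/matrixP => i j; rewrite !mxE hl hr A0.
rewrite det_ublock; congr (_ * _); congr (\det _); apply/matrixP => i j.
  by rewrite !mxE !hl.
by rewrite !mxE !hr.
Qed.

Lemma det_block_trig (I : eqType) (s : seq I) N (A : 'M[R]_N) (p : 'I_N -> I)
    (m : I -> nat) (g : forall c, 'I_(m c) -> 'I_N) :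
  uniq s -> (forall x, p x \in s) ->
  (forall c, injective (g c)) -> (forall c x, (x \in codom (g c)) = (p x == c)) ->
  (forall x y, (index (p y) s < index (p x) s)%N -> A x y = 0) ->
  \det A = \prod_(c <- s) \det (mxsub (g c) (g c) A).
Proof.
elim: s N A p m g => [|c s IHs] N A p m g.
  by case: N A p g => [|N] A p g _ ps; [rewrite det_mx00 big_nil | have := ps ord0].
rewrite cons_uniq => /andP [cNs s_uniq] ps g_inj gE A_trig.
pose g2 := @enum_val _ (mem [pred x | p x != c]).
have p_g2 y : p (g2 y) != c by have := enum_valP y.
rewrite big_cons (@det_ublock_pred _ A [pred x | p x == c] _ _ (g c) g2) //; first last.
- move=> x y /= pxc /eqP pyc; apply: A_trig.
  by rewrite pyc /= eqxx eq_sym (negbTE pxc).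
- by move=> x; rewrite codom_enum_val.
- exact: enum_val_inj.
congr (_ * _).
pose p' := p \o g2.
pose g' c' := @enum_val _ (mem [pred y | p' y == c']).
rewrite (@IHs _ _ p' _ g') //; first last.
- move=> x y lt_xy; rewrite mxE; apply: A_trig => /=.
  by rewrite ![c == _]eq_sym (negbTE (p_g2 x)) (negbTE (p_g2 y)) ltnS.
- by move=> c' x; rewrite codom_enum_val.
- by move=> c'; apply: enum_val_inj.
- by move=> y; have := ps (g2 y); rewrite inE (negbTE (p_g2 y)).
apply: eq_big_seq => c' c's; rewrite -mxsub_comp; apply: det_mxsub_codom => //.
  by move=> a b /enum_val_inj /enum_val_inj.
have c'Nc : c' != c by apply: contraNneq cNs => <-.
move=> x; rewrite gE; apply/codomP/idP => [[y ->]|/eqP pxc'].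
  by have := enum_valP y; rewrite inE.
have xB : x \in [pred x | p x != c] by rewrite inE pxc'.
have g2x : g2 (enum_rank_in xB x) = x by rewrite /g2 enum_rankK_in.
have yB : enum_rank_in xB x \in [pred y | p' y == c'] by rewrite inE /p' /= g2x pxc'.
by exists (enum_rank_in yB (enum_rank_in xB x)); rewrite /= /g' enum_rankK_in.
Qed.
End BlockDeterminant.

Section CharPoly.
Variable R : comNzRingType.

Lemma char_poly_mx_sub m N (A : 'M[R]_N) (h : 'I_m -> 'I_N) : injective h ->
  mxsub h h (char_poly_mx A) = char_poly_mx (mxsub h h A).
Proof. by move=> h_inj; apply/matrixP => i j; rewrite !mxE (inj_eq h_inj). Qed.

Lemma char_poly_mxE N (A : 'M[R]_N) i j :
  char_poly_mx A i j = 'X *+ (i == j) - (A i j)%:P.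
Proof. by rewrite !mxE. Qed.

Lemma char_poly_conj N (A P P' : 'M[R]_N) :
  P *m P' = 1%:M -> char_poly (P *m A *m P') = char_poly A.
Proof.
move=> PP'; pose Q := map_mx (@polyC R) P; pose Q' := map_mx (@polyC R) P'.
have QQ' : Q *m Q' = 1%:M by rewrite -map_mxM PP' map_scalar_mx.
rewrite /char_poly.
have -> : char_poly_mx (P *m A *m P') = Q *m char_poly_mx A *m Q'.
  rewrite /char_poly_mx mulmxBr mulmxBl !map_mxM.
  by rewrite mul_mx_scalar -scalemxAl QQ' scalemx1.
rewrite !det_mulmx mulrC mulrA -det_mulmx.
by rewrite [Q' *m Q]mulmx1C ?det1 ?mul1r.
Qed.

End CharPoly.

Lemma char_poly_diag_conj (F : fieldType) r (B : 'M[F]_r) (w : 'I_r -> F) :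
  (forall i, w i != 0) -> char_poly (\matrix_(i, j) (w i * B i j / w j)) = char_poly B.
Proof.
move=> w_neq0.
have diag_inv : diag_mx (\row_i w i) *m diag_mx (\row_i (w i)^-1) = 1%:M.
  by rewrite mulmx_diag; apply/matrixP => i j; rewrite !mxE divff.
rewrite -(char_poly_conj B diag_inv) mul_diag_mx mul_mx_diag; congr char_poly.
by apply/matrixP => i j; rewrite !mxE.
Qed.

Lemma char_poly_affine (F : fieldType) m (C : 'M[F]_m) (l : seq F) (a b : F) :
  char_poly C = \prod_(x <- l) ('X - x%:P) ->
  char_poly (a%:M + b *: C) = \prod_(x <- l) ('X - (a + b * x)%:P).
Proof.
move=> charC.
have size_l : size l = m by have := size_char_poly C; rewrite charC size_prod_XsubC => -[].
have [->|b_neq0] := eqVneq b 0.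
  under [RHS]eq_bigr do rewrite mul0r addr0.
  rewrite scale0r addr0 char_poly_trig ?scalar_mx_is_trig //.
  rewrite (eq_bigr (fun=> 'X - a%:P)) => [|i _]; last by rewrite mxE eqxx mulr1n.
  by rewrite big_const_ord big_const_seq count_predT size_l.
(* For b != 0, char_poly (a + b C) is b^m times char_poly C evaluated at (X - a) / b. *)
pose q := b^-1 *: ('X - a%:P).
have bq : b%:P * q = 'X - a%:P by rewrite mul_polyC scalerA mulfV ?scale1r.
have shiftE x : 'X - (a + b * x)%:P = b%:P * (q - x%:P).
  by rewrite mulrBr bq polyCD polyCM opprD addrA.
have charE : char_poly_mx (a%:M + b *: C) = b%:P *: map_mx (comp_poly q) (char_poly_mx C).
  apply/matrixP => i j; rewrite !mxE comp_polyB comp_polyC.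
  case: (i == j); rewrite ?mulr1n ?mulr0n ?comp_polyX ?comp_poly0 ?add0r ?sub0r //.
  by rewrite mulrN polyCM.
rewrite /char_poly charE detZ det_map_mx -/(char_poly C) charC rmorph_prod.
under [RHS]eq_bigr do rewrite shiftE.
rewrite [RHS]big_split big_const_seq count_predT size_l iter_mulr_1 /=.
by congr (_ * _); apply: eq_bigr => x _; rewrite comp_polyB comp_polyX comp_polyC.
Qed.

Section EquitablePartition.
Variables (R : comNzRingType) (N r : nat) (blk : 'I_N -> 'I_r) (rep : 'I_r -> 'I_N).
Hypothesis blk_rep : forall j, blk (rep j) = j.

Let rep_inj : injective rep := can_inj blk_rep.

Definition is_rep x := x == rep (blk x).

Lemma is_rep_rep j : is_rep (rep j).
Proof. by rewrite /is_rep blk_rep. Qed.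

Definition rep_shift : 'M[R]_N := \matrix_(x, y) (~~ is_rep x && (y == rep (blk x)))%:R.

Lemma rep_shift_unipotent : (1%:M - rep_shift) *m (1%:M + rep_shift) = 1%:M.
Proof.
have shift_sqr : rep_shift *m rep_shift = 0.
  apply/matrixP => x y; rewrite !mxE; apply: big1 => z _; rewrite !mxE.
  by case: eqP => [->|_]; rewrite ?is_rep_rep ?andbF ?mulr0 ?mul0r.
by rewrite mulmxDr mulmx1 mulmxBl mul1mx shift_sqr subr0 subrK.
Qed.

Lemma unshift_mulmxE n (M : 'M[R]_(N, n)) x y :
  ((1%:M - rep_shift) *m M) x y = M x y - (~~ is_rep x)%:R * M (rep (blk x)) y.
Proof.
rewrite mulmxBl mul1mx !mxE (bigD1 (rep (blk x))) //= big1 => [|z zNrep]; rewrite mxE.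
  by rewrite eqxx andbT addr0.
by rewrite (negbTE zNrep) andbF mul0r.
Qed.

Variables (K : 'M[R]_N) (B : 'M[R]_r).
Hypothesis K_equitable : forall x j, \sum_(y | blk y == j) K x y = B (blk x) j.
Hypothesis K_offblock :
  forall x x' y, blk x = blk x' -> blk y != blk x -> K x y = K x' y.

Local Notation KS := (K *m (1%:M + rep_shift)).

Lemma mulmx_shift_rep x j : KS x (rep j) = B (blk x) j.
Proof.
rewrite mulmxDr mulmx1 !mxE -K_equitable [RHS](bigD1 (rep j)) ?blk_rep //=.
congr (_ + _); rewrite [RHS]big_mkcond; apply: eq_bigr => z _; rewrite mxE.
rewrite (inj_eq rep_inj) eq_sym /is_rep.
have [<-|_] := eqVneq (blk z) j; last by rewrite andbF mulr0.
by case: (z != _); rewrite ?mulr1 ?mulr0.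
Qed.

Lemma mulmx_shift_nonrep x y : ~~ is_rep y -> KS x y = K x y.
Proof.
move=> y_nrep; rewrite mulmxDr mulmx1 !mxE big1 ?addr0 // => z _; rewrite mxE.
have [yz|_] := eqVneq y (rep (blk z)); rewrite ?andbF ?mulr0 //.
by move: y_nrep; rewrite yz is_rep_rep.
Qed.

Definition reduced := (1%:M - rep_shift) *m K *m (1%:M + rep_shift).

Lemma reducedE x y : reduced x y = KS x y - (~~ is_rep x)%:R * KS (rep (blk x)) y.
Proof. by rewrite /reduced -mulmxA unshift_mulmxE. Qed.

Lemma reduced_rep i j : reduced (rep i) (rep j) = B i j.
Proof. by rewrite reducedE is_rep_rep mul0r subr0 mulmx_shift_rep blk_rep. Qed.

Lemma reduced_nonrep x y : ~~ is_rep x -> ~~ is_rep y ->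
  reduced x y = K x y - K (rep (blk x)) y.
Proof. by move=> x_nrep y_nrep; rewrite reducedE x_nrep mul1r !mulmx_shift_nonrep. Qed.

Definition block_label x : option 'I_r := if is_rep x then None else Some (blk x).

Lemma reduced_trig x y : ~~ is_rep x -> block_label y != block_label x ->
  reduced x y = 0.
Proof.
rewrite /block_label => x_nrep; rewrite reducedE x_nrep mul1r (negbTE x_nrep).
have [y_rep _|y_nrep /= yx] := ifP.
  by rewrite (eqP y_rep) !mulmx_shift_rep blk_rep subrr.
rewrite !mulmx_shift_nonrep ?y_nrep //; apply/eqP; rewrite subr_eq0; apply/eqP.
by apply: K_offblock; rewrite ?blk_rep //; apply: contraNneq yx => ->.
Qed.

Theorem char_poly_equitable (m : 'I_r -> nat) (nonrep : forall i, 'I_(m i) -> 'I_N) :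
  (forall i, injective (nonrep i)) ->
  (forall i x, (x \in codom (nonrep i)) = ~~ is_rep x && (blk x == i)) ->
  char_poly K = char_poly B *
    \prod_i char_poly (\matrix_(k, l)
                        (K (nonrep i k) (nonrep i l) - K (rep i) (nonrep i l))).
Proof.
move=> nonrep_inj nonrepE.
rewrite -(char_poly_conj K rep_shift_unipotent) -/reduced /char_poly.
pose size_of c := if c is Some i then m i else r.
pose block c : 'I_(size_of c) -> 'I_N :=
  if c is Some i then nonrep i else rep.
rewrite (@det_block_trig _ _ (None :: map Some (index_enum 'I_r)) _ _ block_label
          size_of block); first last.
- move=> x y lt_yx.
  have yx : block_label y != block_label x by apply: contraTneq lt_yx => ->; rewrite ltnn.
  have x_nrep : ~~ is_rep x by move: lt_yx; rewrite /block_label; case: (is_rep x).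
  have xy : x != y by apply: contraNneq yx => ->.
  by rewrite char_poly_mxE reduced_trig // (negbTE xy) mulr0n subr0.
- case=> [i|] x /=; first by rewrite nonrepE /block_label; case: (is_rep x).
  apply/codomP/idP => [[j ->]|]; first by rewrite /block_label is_rep_rep.
  by rewrite /block_label; case: ifP => // x_rep _; exists (blk x); apply/eqP.
- by case=> [i|]; [apply: nonrep_inj | apply: rep_inj].
- move=> x; rewrite /block_label; case: (is_rep x); first exact: mem_head.
  by rewrite inE map_f ?mem_index_enum ?orbT.
- rewrite /= map_inj_uniq ?index_enum_uniq ?andbT; last by move=> a b [].
  by apply/mapP => -[].
have nonrepP i k : ~~ is_rep (nonrep i k) && (blk (nonrep i k) == i).
  by rewrite -nonrepE codom_f.
rewrite big_cons big_map /= char_poly_mx_sub //; congr (_ * _).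
  by congr (\det (char_poly_mx _)); apply/matrixP => i j; rewrite mxE reduced_rep.
apply: eq_bigr => i _; rewrite char_poly_mx_sub //; congr (\det (char_poly_mx _)).
apply/matrixP => k l; have /andP [k_nrep /eqP blk_k] := nonrepP i k.
by rewrite mxE [RHS]mxE reduced_nonrep ?blk_k //; case/andP: (nonrepP i l).
Qed.
End EquitablePartition.

Section ConstantRowSums.
Variable R : comNzRingType.

Lemma char_poly_const_row_sum N (A : 'M[R]_N) (a : R) (v : 'I_N) m (h : 'I_m -> 'I_N) :
  (forall x, \sum_y A x y = a) -> injective h -> (forall x, (x \in codom h) = (x != v)) ->
  char_poly A = ('X - a%:P) * char_poly (\matrix_(k, l) (A (h k) (h l) - A v (h l))).
Proof.
move=> rowA h_inj hE.
rewrite (@char_poly_equitable R N 1 (fun=> ord0) (fun=> v) (fun j => esym (ord1 j))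
  A a%:M _ _ (fun=> m) (fun=> h)) //.
- by rewrite big_ord1 /char_poly det_mx11 char_poly_mxE mxE eqxx.
- by move=> x j; rewrite [j]ord1 mxE eqxx mulr1n -(rowA x).
- by move=> i x; rewrite [i]ord1 eqxx andbT hE.
Qed.

Lemma degree_sum (T : finType) (e : rel T) x : (degree e x)%:R = \sum_y (e x y)%:R :> R.
Proof.
rewrite /degree -sum1dep_card natr_sum big_mkcond /=.
by apply: eq_bigr => y _; case: (e x y).
Qed.

Definition adj_deflate m (e : rel 'I_m) (v : 'I_m) : 'M[R]_m.-1 :=
  \matrix_(k, l) ((e (lift v k) (lift v l))%:R - (e v (lift v l))%:R).

Lemma char_poly_adjmx_regular m (e : rel 'I_m) d (v : 'I_m) : regular e d ->
  char_poly (adjmx R e) = ('X - d%:R%:P) * char_poly (adj_deflate e v).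
Proof.
move=> e_reg.
rewrite (@char_poly_const_row_sum _ (adjmx R e) d%:R (enum_rank v) _ (enum_rank \o lift v)).
- by congr (_ * char_poly _); apply/matrixP => k l; rewrite !mxE !enum_rankK.
- move=> x; rewrite -(e_reg (enum_val x)) degree_sum [RHS](reindex (@enum_val _ 'I_m)).
    by apply: eq_bigr => y _; rewrite mxE.
  exact/onW_bij/enum_val_bij.
- by move=> k l /enum_rank_inj /lift_inj.
move=> x; rewrite -(enum_valK x) (inj_eq enum_rank_inj).
apply/codomP/idP => [[k /enum_rank_inj ->]|]; first by rewrite eq_sym neq_lift.
by rewrite eq_sym => /unlift_some [k -> _]; exists k.
Qed.
End ConstantRowSums.

Lemma char_poly_adj_deflate (R : idomainType) m (e : rel 'I_m) d (v : 'I_m) (l : seq R) :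
  regular e d -> is_spectrum (adjmx R e) l -> head 0 l = d%:R ->
  char_poly (adj_deflate R e v) = \prod_(x <- behead l) ('X - x%:P).
Proof.
move=> e_reg; rewrite /is_spectrum (char_poly_adjmx_regular _ v e_reg) => charA.
case: l charA => [|x l] /= charA; last first.
  move=> x_d; rewrite big_cons x_d in charA.
  exact: (@mulfI {poly R} _ (negbT (polyXsubC_eq0 _)) _ _ charA).
have := congr1 (fun p : {poly R} => size p) charA.
rewrite /= big_nil size_poly1 size_Mmonic ?char_poly_monic ?polyXsubC_eq0 //.
by rewrite size_XsubC size_char_poly.
Qed.

Lemma deformed_laplacianE (R : comNzRingType) (T : finType) (e : rel T) (s : R) u v :
  deformed_laplacian e s (enum_rank u) (enum_rank v) =
  (u == v)%:R * (1 + s ^+ 2 * ((degree e u)%:R - 1)) - s * (e u v)%:R.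
Proof.
rewrite /deformed_laplacian !mxE !enum_rankK (inj_eq enum_rank_inj).
by case: (u == v); rewrite /= ?mulr1n ?mulr0n; ring.
Qed.

Lemma path_adjnn r (i : 'I_r) : path_adj i i = false.
Proof. by rewrite /path_adj orbb gtn_eqF. Qed.

Section PathJoin.
Variables (R : comNzRingType) (r : nat) (n d : 'I_r -> nat).
Variables (e : forall i : 'I_r, rel 'I_(n i)) (s : R).
Arguments e : clear implicits.
Hypothesis n_gt0 : forall i, (0 < n i)%N.
Hypothesis e_reg : forall i : 'I_r, regular (e i) (d i).

Local Notation V := {i : 'I_r & 'I_(n i)}.
Local Notation vtx := (Tagged (fun i => 'I_(n i))).
Local Notation M := (deformed_laplacian (path_join e) s).

Lemma sum_join_vertices (F : V -> R) : \sum_u F u = \sum_j \sum_(k : 'I_(n j)) F (vtx k).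
Proof.
rewrite (sig_big_dep xpredT (fun _ => xpredT) (fun i (k : 'I_(n i)) => F (vtx k))) /=.
by apply: eq_bigr => -[].
Qed.

Lemma sum_join_block (F : V -> R) j :
  \sum_(u | tag u == j) F u = \sum_(k : 'I_(n j)) F (vtx k).
Proof.
rewrite big_mkcond sum_join_vertices (bigD1 j) //= eqxx [X in _ + X]big1 ?addr0 //.
by move=> i /negbTE ij; apply: big1 => k _; rewrite ij.
Qed.

Lemma path_join_in i (a b : 'I_(n i)) : path_join e (vtx a) (vtx b) = e i a b.
Proof. by rewrite /path_join /= eqxx tagged_asE. Qed.

Lemma path_join_out u w : tag u != tag w -> path_join e u w = path_adj (tag u) (tag w).
Proof. by rewrite /path_join => /negbTE ->. Qed.

Lemma path_join_row_block i (a : 'I_(n i)) j :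
  \sum_(k : 'I_(n j)) (path_join e (vtx a) (vtx k))%:R =
  if i == j then (d i)%:R else (path_adj i j)%:R * (n j)%:R :> R.
Proof.
have [<-|ij] := eqVneq.
  by under eq_bigr do rewrite path_join_in; rewrite -degree_sum e_reg.
under eq_bigr do rewrite path_join_out //.
by rewrite /= sumr_const card_ord mulr_natr.
Qed.

Lemma degree_path_join u :
  (degree (path_join e) u)%:R = (d (tag u) + Nsum n (tag u))%:R :> R.
Proof.
case: u => i a /=; rewrite degree_sum sum_join_vertices.
under eq_bigr do rewrite path_join_row_block.
rewrite natrD (bigD1 i) //= eqxx; congr (_ + _).
rewrite /Nsum natr_sum [RHS]big_mkcond [RHS](bigD1 i) //= path_adjnn add0r.
apply: eq_bigr => j ji; rewrite eq_sym (negbTE ji).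
by case: (path_adj i j); rewrite ?mul1r ?mul0r.
Qed.

Definition join_diag i : R := 1 + s ^+ 2 * ((d i + Nsum n i)%:R - 1).

Definition join_quotient : 'M[R]_r := \matrix_(i, j)
  if i == j then join_diag i - s * (d i)%:R else - s * ((path_adj i j)%:R * (n j)%:R).

Lemma laplacian_path_joinE u w : M (enum_rank u) (enum_rank w) =
  (u == w)%:R * join_diag (tag u) - s * (path_join e u w)%:R.
Proof. by rewrite deformed_laplacianE degree_path_join. Qed.

Lemma laplacian_path_join_equitable x j :
  \sum_(y | tag (enum_val y) == j) M x y = join_quotient (tag (enum_val x)) j.
Proof.
rewrite -(enum_valK x) enum_rankK; case: (enum_val x) => i a /=.
rewrite (reindex (@enum_rank V)) /=; last exact/onW_bij/enum_rank_bij.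
under eq_bigl do rewrite enum_rankK.
rewrite sum_join_block; under eq_bigr do rewrite laplacian_path_joinE.
rewrite sumrB -mulr_sumr path_join_row_block mxE.
have [<-|ij] := eqVneq i j.
  rewrite (bigD1 a) //= eqxx mul1r big1 ?addr0 // => k /negbTE ka.
  by rewrite eq_Tagged /= eq_sym ka mul0r.
rewrite big1 ?sub0r ?mulNr // => k _.
have -> : (vtx a == vtx k) = false by apply: contraNF ij => /eqP /(congr1 tag) /= ->.
by rewrite mul0r.
Qed.

Lemma laplacian_path_join_offblock x x' y : tag (enum_val x) = tag (enum_val x') ->
  tag (enum_val y) != tag (enum_val x) -> M x y = M x' y.
Proof.
rewrite -(enum_valK x) -(enum_valK x') -(enum_valK y) !enum_rankK.
move: (enum_val x) (enum_val x') (enum_val y) => u u' w uu' wu.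
have wu' : tag w != tag u' by rewrite -uu'.
have [Nuw Nu'w] : (u == w) = false /\ (u' == w) = false.
  by split; [apply: contraNF wu | apply: contraNF wu'] => /eqP ->.
by rewrite !laplacian_path_joinE Nuw Nu'w !path_join_out 1?eq_sym // uu'.
Qed.

Definition base_vertex i : 'I_(n i) := Ordinal (n_gt0 i).

Theorem char_poly_path_join : char_poly M = char_poly join_quotient *
  \prod_i char_poly ((join_diag i)%:M + (- s) *: adj_deflate R (e i) (base_vertex i)).
Proof.
pose blk (x : 'I_#|{: V}|) := tag (enum_val x).
pose rep j := enum_rank (vtx (base_vertex j)).
pose nonrep i k := enum_rank (vtx (lift (base_vertex i) k)).
have blk_rep j : blk (rep j) = j by rewrite /blk enum_rankK.
rewrite (@char_poly_equitable R _ r blk rep blk_rep M join_quotient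
  laplacian_path_join_equitable laplacian_path_join_offblock _ nonrep).
- congr (_ * _); apply: eq_bigr => i _; congr char_poly; apply/matrixP => k l.
  rewrite mxE !laplacian_path_joinE !path_join_in [RHS]mxE !mxE !eq_Tagged /=.
  rewrite (inj_eq (@lift_inj _ _)).
  by case: (k == l); rewrite ?mulr1n ?mulr0n; ring.
- by move=> i k l /enum_rank_inj /eqP; rewrite eq_Tagged => /eqP /lift_inj.
move=> i x; rewrite -(enum_valK x); move: (enum_val x) => u.
rewrite /is_rep /blk /rep !enum_rankK (inj_eq enum_rank_inj).
apply/codomP/andP => [[k /enum_rank_inj ->]|[]].
  by rewrite /= eq_Tagged eq_sym neq_lift.
case: u => j a /=; rewrite eq_Tagged => a_nbase /eqP ji; subst j.
have /unlift_some [k -> _] : base_vertex i != a by rewrite eq_sym.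
by exists k.
Qed.
End PathJoin.

Lemma char_poly_join_quotient (R : rcfType) r (n d : 'I_r -> nat) (s : R) :
  (forall i, 0 < n i)%N -> char_poly (join_quotient n d s) = char_poly (Fmx n d s).
Proof.
move=> n_gt0; pose w i : R := Num.sqrt (n i)%:R.
have w_neq0 i : w i != 0 by rewrite sqrtr_eq0 -ltNge ltr0n.
have n_div_w i : (n i)%:R / w i = w i.
  by rewrite -{1}[(n i)%:R]sqr_sqrtr ?ler0n // expr2 (mulfK (w_neq0 i)).
rewrite -(char_poly_diag_conj (join_quotient n d s) w_neq0); congr char_poly.
apply/matrixP => i j; rewrite !mxE; have [<-|ij] := eqVneq i j.
  by rewrite mulrAC divff // mul1r /join_diag /Mi_eig natrD; ring.
case: (path_adj i j); rewrite ?mul0r ?mulr0 ?mul0r //.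
by rewrite mul1r -!mulrA n_div_w natrM sqrtrM ?ler0n // mulrCA.
Qed.

Theorem corollary6p5 (R : rcfType) (r : nat) (n d : 'I_r -> nat)
  (e : forall i : 'I_r, rel 'I_(n i)) (lam : 'I_r -> seq R) (s : R) :
  (forall i, 0 < n i)%N ->
  (forall i, simple_graph (e i)) ->
  (forall i, regular (e i) (d i)) ->
  (forall i, is_spectrum (adjmx R (e i)) (lam i)) ->
  (forall i, head 0 (lam i) = (d i)%:R) ->
  char_poly (deformed_laplacian (path_join e) s) =
    (\prod_(i < r) \prod_(x <- behead (lam i)) ('X - (Mi_eig n d s i x)%:P))
    * char_poly (Fmx n d s).
Proof.
move=> n_gt0 _ e_reg lam_spec lam_head.
rewrite (char_poly_path_join s n_gt0 e_reg) (char_poly_join_quotient d s n_gt0) mulrC.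
congr (_ * _); apply: eq_bigr => i _.
have char_deflate := char_poly_adj_deflate _ (e_reg i) (lam_spec i) (lam_head i).
rewrite (char_poly_affine _ _ (char_deflate _)).
by apply: eq_bigr => x _; rewrite /join_diag /Mi_eig natrD; congr ('X - _%:P); ring.
Qed.
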